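(* For any graph $G$ and any two independent sets $I_s,I_t$ of $G$, a shortest reconfiguration sequence from $I_s$ to $I_t$ has length at most $\mathrm{cc}(I_s\triangle I_t)$.
   Context: All graphs are finite, simple and undirected. For $V'\subseteq V(G)$, $\mathrm{cc}(V')$ denotes the number of connected components of the induced subgraph $G[V']$. A reconfiguration sequence from $I_s$ to $I_t$ of length $\ell$ is a sequence $\langle I_s=I_0,\dots,I_\ell=I_t\rangle$ of independent sets of $G$ such that $G[I_{i-1}\triangle I_i]$ is connected for every $i\in\{1,\dots,\ell\}$. *)

From mathcomp Require Import all_boot.
Set Implicit Arguments. Unset Strict Implicit. Unset Printing Implicit Defensive.

Definition simple_graph (T : finType) (e : rel T) : Prop :=
  symmetric e /\ irreflexive e.

Definition induced_rel (T : finType) (e : rel T) (A : {set T}) : rel T :=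
  [rel x y | [&& x \in A, y \in A & e x y]].

Definition independent (T : finType) (e : rel T) (I : {set T}) : bool :=
  [forall x in I, forall y in I, ~~ e x y].

Definition connected_induced (T : finType) (e : rel T) (A : {set T}) : bool :=
  (A != set0) && [forall x in A, forall y in A, connect (induced_rel e A) x y].

Definition cc (T : finType) (e : rel T) (A : {set T}) : nat :=
  #|[set [set y in A | connect (induced_rel e A) x y] | x in A]|.

Definition symdiff (T : finType) (A B : {set T}) : {set T} :=
  (A :\: B) :|: (B :\: A).

Definition reconf_seq (T : finType) (e : rel T) (Is It : {set T})
    (l : nat) (f : nat -> {set T}) : Prop :=
  f 0 = Is /\ f l = It /\
  (forall i, i <= l -> independent e (f i)) /\
  (forall i, 1 <= i <= l -> connected_induced e (symdiff (f i.-1) (f i))).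

From mathcomp Require Import all_boot.

(* Let C_1, ..., C_k be the connected components of G[Is △ It] and flip them
   one at a time: f_i := Is △ (C_1 ∪ ... ∪ C_i).  Consecutive sets differ by
   the connected set C_i, so the sequence has length k = cc(Is △ It).  Each
   f_i is independent: it agrees with It on the flipped components and with Is
   elsewhere, vertices of Is ∩ It are never flipped, and an edge from a
   flipped to an unflipped vertex of Is △ It would join two components. *)

Set Implicit Arguments.
Unset Strict Implicit.
Unset Printing Implicit Defensive.

Lemma nth_notin_take (X : eqType) (x0 : X) (s : seq X) i :
  uniq s -> i < size s -> nth x0 s i \notin take i s.
Proof.
move=> + iS; rewrite -{1}(cat_take_drop i s) (drop_nth x0 iS) cat_uniq /=.
by case/and3P=> _ /norP[].
Qed.

Section Reconfiguration.
Variables (T : finType) (e : rel T).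

Lemma independentP (I : {set T}) :
  reflect {in I &, forall x y, ~~ e x y} (independent e I).
Proof.
apply: (iffP forall_inP) => [indI x y xI yI | indI x xI].
  exact: forall_inP (indI x xI) y yI.
by apply/forall_inP => y; apply: indI.
Qed.

Lemma symdiff0 (A : {set T}) : symdiff A set0 = A.
Proof. by apply/setP => x; rewrite !inE; case: (x \in A). Qed.

Lemma symdiffK (A B : {set T}) : symdiff A (symdiff A B) = B.
Proof.
by apply/setP => x; rewrite !inE; case: (x \in A) (x \in B) => [] [].
Qed.

Lemma in_symdiff_sub (A B U : {set T}) x : U \subset symdiff A B ->
  (x \in symdiff A U) = (if x \in U then x \in B else x \in A).
Proof.
move/subsetP/(_ x); rewrite !inE.
by case: (x \in U) (x \in A) (x \in B) => [] [] [] // /(_ isT).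
Qed.

Lemma symdiff_setU_disjoint (A U B : {set T}) : [disjoint U & B] ->
  symdiff (symdiff A U) (symdiff A (U :|: B)) = B.
Proof.
move=> dUB; apply/setP => x; rewrite !inE.
have [xU|_] := boolP (x \in U).
  by rewrite (disjointFr dUB xU); case: (x \in A).
by case: (x \in A) (x \in B) => [] [].
Qed.

Lemma closed_bigcup (r : rel T) (s : seq {set T}) :
  {in s, forall B : {set T}, closed r B} -> closed r (\bigcup_(B <- s) B).
Proof.
move=> cls x y rxy; rewrite bigcup_seq.
apply/bigcupP/bigcupP => -[B Bs inB]; exists B => //.
  by rewrite -(cls B Bs _ _ rxy).
by rewrite (cls B Bs _ _ rxy).
Qed.

Lemma connect_induced_closed (A B : {set T}) x y :
  closed (induced_rel e A) B -> x \in B ->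
  connect (induced_rel e A) x y -> connect (induced_rel e B) x y.
Proof.
move=> clB xB /connectP[p + ->].
elim: p x xB => //= z p IHp x xB /andP[rxz /(IHp z)].
have zB : z \in B by rewrite -(clB _ _ rxz).
move=> /(_ zB); apply: connect_trans; apply: connect1.
by case/and3P: rxz => _ _ exz; apply/and3P.
Qed.

Definition components (D : {set T}) : {set {set T}} :=
  equivalence_partition (connect (induced_rel e D)) D.

Lemma cc_components (D : {set T}) : cc e D = #|components D|.
Proof. by []. Qed.

Hypothesis esym : symmetric e.

Lemma induced_rel_sym (A : {set T}) : symmetric (induced_rel e A).
Proof. by move=> x y; rewrite /induced_rel /= esym andbCA. Qed.

Lemma connect_induced_equiv (A : {set T}) :
  equivalence_rel (connect (induced_rel e A)).
Proof.
have symA := sym_connect_sym (induced_rel_sym A).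
move=> x y z; split=> [|xy]; first exact: connect0.
by apply/idP/idP; [apply: connect_trans; rewrite symA | apply: connect_trans].
Qed.

Lemma components_partition (D : {set T}) : partition (components D) D.
Proof.
by apply: equivalence_partitionP => x y z _ _ _; apply: connect_induced_equiv.
Qed.

Lemma component_closed (D : {set T}) x :
  closed (induced_rel e D) [set y in D | connect (induced_rel e D) x y].
Proof.
move=> y z ryz; have /and3P[yD zD _] := ryz; rewrite !inE yD zD.
exact: (connect_closed (sym_connect_sym (induced_rel_sym D))).
Qed.

Lemma component_connected (D : {set T}) x : x \in D ->
  connected_induced e [set y in D | connect (induced_rel e D) x y].
Proof.
set B := [set y in D | _] => xD.
have xB : x \in B by rewrite inE xD connect0.
have fromx y : y \in B -> connect (induced_rel e B) x y.
  rewrite inE => /andP[_]; apply: connect_induced_closed xB.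
  exact: component_closed.
apply/andP; split; first by apply/set0Pn; exists x.
apply/forall_inP => y yB; apply/forall_inP => z zB.
apply: connect_trans (fromx z zB).
by rewrite (sym_connect_sym (induced_rel_sym B)) fromx.
Qed.

Lemma components_closed_connected (D : {set T}) :
  {in components D, forall B : {set T},
    closed (induced_rel e D) B /\ connected_induced e B}.
Proof.
move=> B /imsetP[x xD ->]; split; first exact: component_closed.
exact: component_connected.
Qed.

Lemma independent_symdiff_closed (Is It U : {set T}) :
  independent e Is -> independent e It -> U \subset symdiff Is It ->
  closed (induced_rel e (symdiff Is It)) U -> independent e (symdiff Is U).
Proof.
move=> /independentP indIs /independentP indIt sU clU.
have across x y : x \notin U -> y \in U -> x \in Is -> y \in It -> ~~ e x y.
  move=> xU yU xIs yIt; have [xIt|xNIt] := boolP (x \in It); first exact: indIt.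
  have yD : y \in symdiff Is It := subsetP sU y yU.
  have xD : x \in symdiff Is It by rewrite !inE xIs xNIt.
  apply/negP => exy; move: xU; rewrite (clU x y) ?yU //.
  exact/and3P.
apply/independentP => x y; rewrite !(in_symdiff_sub _ sU).
case xU: (x \in U); case yU: (y \in U) => xI yI.
- exact: indIt.
- by rewrite esym across ?xU ?yU.
- by rewrite across ?xU ?yU.
- exact: indIs.
Qed.

Lemma reconf_seq_partition (Is It : {set T}) (P : {set {set T}}) :
  independent e Is -> independent e It -> partition P (symdiff Is It) ->
  {in P, forall B : {set T},
    closed (induced_rel e (symdiff Is It)) B /\ connected_induced e B} ->
  exists f, reconf_seq e Is It #|P| f.
Proof.
set D := symdiff Is It => indIs indIt /and3P[/eqP coverP trivP _] blocksP.
set s := enum P; pose U i := \bigcup_(B <- take i s) B.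
have takeP i B : B \in take i s -> B \in P by move/mem_take; rewrite mem_enum.
have nthP i : i < size s -> nth set0 s i \in P.
  by move/(mem_nth set0); rewrite mem_enum.
have sUD i : U i \subset D.
  rewrite /U bigcup_seq -coverP; apply/bigcupsP => B /takeP.
  exact: bigcup_sup.
exists (fun i => symdiff Is (U i)); rewrite cardE; split.
  by rewrite /U take0 big_nil symdiff0.
split; first by rewrite /U take_size big_enum /= -/(cover P) coverP symdiffK.
split=> [i _|[//|i] /= iS].
  apply: (independent_symdiff_closed indIs indIt (sUD i)).
  by apply: closed_bigcup => B /takeP /blocksP[].
have BnotU := nth_notin_take set0 (enum_uniq (mem P)) iS.
have dUB : [disjoint U i & nth set0 s i].
  rewrite /U bigcup_seq disjoint_sym; apply: bigcup_disjoint => B BU.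
  apply: (trivIsetP trivP) => //; [exact: nthP | exact: takeP BU |].
  by apply: contraNneq BnotU => ->.
rewrite /U (take_nth set0 iS) big_rcons /= symdiff_setU_disjoint //.
by have [] := blocksP _ (nthP i iS).
Qed.

End Reconfiguration.

Theorem mainTheorem19 (T : finType) (e : rel T) (Is It : {set T}) :
  simple_graph e -> independent e Is -> independent e It ->
  exists (l : nat) (f : nat -> {set T}),
    reconf_seq e Is It l f /\ l <= cc e (symdiff Is It).
Proof.
move=> [esym _] indIs indIt; set D := symdiff Is It.
have [f reconf] := reconf_seq_partition esym indIs indIt
  (components_partition esym D) (components_closed_connected esym (D := D)).
by exists #|components e D|, f; rewrite cc_components.
Qed.
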